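(* Let $(v,b)$ satisfy (C2), with associated pair $(\lambda,\varepsilon)$. Let $\mu=v/2$ if $\varepsilon\equiv v/2\pmod 2$ and $\mu=v/2+1$ otherwise. Then every TS$(v;b)$ $(V,\mathcal F)$ satisfies $$\sum_{\{x,y\}\in\binom V2}\lambda_{x,y}^2\ \ge\ \binom v2\lambda^2+2\varepsilon\lambda+\mu,$$ and equality holds for any TS$(v;b)$ in which all $\lambda_{x,y}\in\{\lambda-1,\lambda,\lambda+1\}$ and whose defect graph is isomorphic to $H^0_{v,\varepsilon}$ (when $\varepsilon\equiv v/2\pmod2$) or to one of $H^1_{v,\varepsilon},H^2_{v,\varepsilon},H^3_{v,\varepsilon},H^4_{v,\varepsilon}$ (when $\varepsilon\not\equiv v/2\pmod 2$).
   Context: A triple system TS$(v;b)$ is a pair $(V,\mathcal F)$ where $V$ is a set of $v\ge 3$ points and $\mathcal F$ is a multiset of $b$ 3-subsets of $V$ (blocks); repeated blocks allowed. $\lambda_{x,y}$ is the number of blocks (with multiplicity) containing $\{x,y\}$. The associated pair $(\lambda,\varepsilon)$ of $(v,b)$: integers with $3b=\lambda\binom v2+\varepsilon$, $-v/2<\varepsilon<v/2$. (C2): $v$ even and $\lambda v(v-1)/6-v/6<b<\lambda v(v-1)/6+v/6$ for an odd integer $\lambda$ (this is the $\lambda$ of the associated pair). Defect graph: if all $\lambda_{x,y}\in\{\lambda-1,\lambda,\lambda+1\}$, the defect graph is the graph on $V$ with edges $\{x,y\}$ with $\lambda_{x,y}=\lambda+1$ (labelled $+1$) and with $\lambda_{x,y}=\lambda-1$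 (labelled $-1$); isomorphisms preserve labels. $H^0_{v,\varepsilon}$: perfect matching of $V$ with $(v+2\varepsilon)/4$ edges $+1$ and $(v-2\varepsilon)/4$ edges $-1$. For $1\le i\le 4$, $H^i_{v,\varepsilon}$ is the vertex-disjoint union of a star $K_{1,3}$ and a matching covering the remaining $v-4$ vertices, where: $H^1$: star with two $+1$ and one $-1$ edge, matching with $(v-6+2\varepsilon)/4$ edges $+1$ and $(v-2-2\varepsilon)/4$ edges $-1$; $H^2$: star with one $+1$ and two $-1$ edges, matching with $(v-2+2\varepsilon)/4$ edges $+1$ and $(v-6-2\varepsilon)/4$ edges $-1$; $H^3$: star with three $+1$ edges, matching with $(v-10+2\varepsilon)/4$ edges $+1$ and $(v+2-2\varepsilon)/4$ edges $-1$; $H^4$: star with three $-1$ edges, matching with $(v+2+2\varepsilon)/4$ edges $+1$ and $(v-10-2\varepsilon)/4$ edges $-1$. *)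

From mathcomp Require Import all_boot all_order all_algebra.
Set Implicit Arguments. Unset Strict Implicit. Unset Printing Implicit Defensive.
Import Order.TTheory GRing.Theory Num.Theory.
Local Open Scope ring_scope.

Section TS.
Variable V : finType.

(* A triple system TS(v;b): point set V (a finite type) with v = #|V| >= 3,
   and a multiset F (a sequence, repetitions allowed) of b = size F blocks,
   each a 3-subset of V. *)
Definition is_TS (v b : nat) (F : seq {set V}) : Prop :=
  [/\ #|V| = v, (3 <= v)%N, size F = b & all (fun B : {set V} => #|B| == 3%N) F].

Definition pairs : {set {set V}} := [set e : {set V} | #|e| == 2%N].

Definition lamp (F : seq {set V}) (e : {set V}) : nat :=
  count (fun B : {set V} => e \subset B) F.

(* label of a pair in the defect graph w.r.t. lambda *)
Definition dlab (F : seq {set V}) (lam : int) (e : {set V}) : int :=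
  (lamp F e)%:Z - lam.

Definition near_balanced (F : seq {set V}) (lam : int) : Prop :=
  forall e, e \in pairs -> dlab F lam e \in [:: -1; 0; 1].

Definition dedges (F : seq {set V}) (lam s : int) : {set {set V}} :=
  [set e in pairs | dlab F lam e == s].

Definition dedges_all (F : seq {set V}) (lam : int) : {set {set V}} :=
  [set e in pairs | dlab F lam e != 0].

Definition ddeg (F : seq {set V}) (lam : int) (x : V) : nat :=
  #|[set e in dedges_all F lam | x \in e]|.

(* defect graph is isomorphic to H^0_{v,eps}: a perfect matching of V with
   (v+2eps)/4 edges labelled +1 and (v-2eps)/4 edges labelled -1 *)
Definition defect_is_H0 (F : seq {set V}) (lam : int) (v : nat) (eps : int)
  : Prop :=
  [/\ forall x, ddeg F lam x = 1%N,
      4 * (#|dedges F lam 1|)%:Z = v%:Z + 2 * eps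
    & 4 * (#|dedges F lam (-1)|)%:Z = v%:Z - 2 * eps].

(* defect graph is the vertex-disjoint union of a star K_{1,3} (center c)
   with sp edges labelled +1 and sm edges labelled -1, and a matching covering
   the remaining v-4 vertices with np edges +1 and nm edges -1, where
   4*np = cp and 4*nm = cm. *)
Definition defect_is_star_matching (F : seq {set V}) (lam : int)
  (sp sm : nat) (cp cm : int) : Prop :=
  exists c : V,
  [/\ ddeg F lam c = 3%N,
      forall x, x != c -> ddeg F lam x = 1%N,
      (#|[set e in dedges F lam 1 | c \in e]| = sp /\
       #|[set e in dedges F lam (-1) | c \in e]| = sm),
      4 * (#|[set e in dedges F lam 1 | c \notin e]|)%:Z = cp
    & 4 * (#|[set e in dedges F lam (-1) | c \notin e]|)%:Z = cm].

Definition defect_is_H1 F lam (v : nat) (eps : int) :=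
  defect_is_star_matching F lam 2 1 (v%:Z - 6 + 2 * eps) (v%:Z - 2 - 2 * eps).
Definition defect_is_H2 F lam (v : nat) (eps : int) :=
  defect_is_star_matching F lam 1 2 (v%:Z - 2 + 2 * eps) (v%:Z - 6 - 2 * eps).
Definition defect_is_H3 F lam (v : nat) (eps : int) :=
  defect_is_star_matching F lam 3 0 (v%:Z - 10 + 2 * eps) (v%:Z + 2 - 2 * eps).
Definition defect_is_H4 F lam (v : nat) (eps : int) :=
  defect_is_star_matching F lam 0 3 (v%:Z + 2 + 2 * eps) (v%:Z - 10 - 2 * eps).

Definition sumsq (F : seq {set V}) : int :=
  \sum_(e in pairs) ((lamp F e)%:Z) ^+ 2.

End TS.

Definition assoc_pair (v b : nat) (lam eps : int) : Prop :=
  [/\ (3 * b)%:Z = lam * ('C(v, 2))%:Z + eps,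
      - (v%:Z) < 2 * eps & 2 * eps < v%:Z].

(* condition (C2) (in terms of the associated lambda, multiplied by 6):
   v even, lam odd, lam v(v-1) - v < 6b < lam v(v-1) + v *)
Definition C2 (v b : nat) (lam : int) : Prop :=
  [/\ ~~ odd v, (2 %| lam - 1)%Z,
      lam * (v * (v - 1))%:Z - v%:Z < (6 * b)%:Z
    & (6 * b)%:Z < lam * (v * (v - 1))%:Z + v%:Z].

Definition eps_cong (v : nat) (eps : int) : bool :=
  (2 %| eps - (v %/ 2)%:Z)%Z.

Definition mu (v : nat) (eps : int) : int :=
  if eps_cong v eps then (v %/ 2)%:Z else (v %/ 2)%:Z + 1.

From mathcomp Require Import all_boot all_order all_algebra zify ring.
Set Implicit Arguments. Unset Strict Implicit. Unset Printing Implicit Defensive.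
Import Order.TTheory GRing.Theory Num.Theory.
Local Open Scope ring_scope.

(* Write d_e = lambda_e - lambda for the defect of a pair e.  Expanding the
   square gives  sum lambda_e^2 = C(v,2) lambda^2 + 2 lambda (sum d_e) + S
   with S = sum d_e^2, and double counting (each block covers 3 pairs) shows
   sum d_e = eps, so everything reduces to the bound  S >= mu.
   - S >= N, the number of edges of the defect graph, and S = N when all
     defects lie in {-1,0,1}; moreover S = sum d_e = eps (mod 2).
   - Through a point x the multiplicities sum to an even number (a block
     through x covers 2 pairs through x), whereas (v - 1) lambda is odd under
     (C2): so every point meets a defect edge and 2 N >= v.
   Hence S >= v/2 with S = eps (mod 2), i.e. S >= mu.  For equality, the
   defect graphs H^0 (all degrees 1) and H^1..H^4 (degree sum v + 2) have
   N = v/2 resp. N = v/2 + 1 edges, which is mu in the respective case. *)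

Lemma int_sum_nat (I : finType) (A : {set I}) (g : I -> nat) :
  (\sum_(i in A) g i)%N%:Z = \sum_(i in A) (g i)%:Z.
Proof. by rewrite -natz natr_sum; apply: eq_bigr => i _; rewrite natz. Qed.

Section SquareSums.
Variables (T : finType) (A : {set T}) (f : T -> int).

(* The support of f in A; for the defect function it is the defect graph. *)
Let support := [set e in A | f e != 0].

Lemma card_support_sum : #|support|%:Z = \sum_(e in A | f e != 0) 1.
Proof.
rewrite -sum1_card -natz natr_sum; apply: eq_big => [e|e _]; by rewrite ?inE.
Qed.

Lemma card_support_le_sum_sqr : #|support|%:Z <= \sum_(e in A) f e ^+ 2.
Proof.
rewrite (bigID (fun e => f e != 0)) /= card_support_sum -[X in X <= _]addr0.
apply: lerD; last by apply: sumr_ge0 => e _; exact: sqr_ge0.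
apply: ler_sum => e /andP[_]; set d := f e; nia.
Qed.

Lemma sum_sqr_unit_values : {in A, forall e, f e \in [:: -1; 0; 1]} ->
  \sum_(e in A) f e ^+ 2 = #|support|%:Z.
Proof.
move=> unit_f; rewrite (bigID (fun e => f e != 0)) /= card_support_sum.
rewrite [X in _ + X]big1 ?addr0 => [|e /andP[_ /negPn/eqP ->]]; last by rewrite expr0n.
apply: eq_bigr => e /andP[eA]; have := unit_f e eA; rewrite !inE.
by case/or3P => /eqP ->.
Qed.

(* d^2 and d have the same parity, hence so have the two sums. *)
Lemma sum_sqr_parity : (2 %| \sum_(e in A) f e ^+ 2 - \sum_(e in A) f e)%Z.
Proof.
rewrite -sumrB; apply: rpred_sum => e _; set d := f e.
have [/dvdzP[k ->]|/dvdzP[k /eqP]] : (2 %| d)%Z \/ (2 %| d - 1)%Z by lia.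
  by apply/dvdzP; exists (2 * k ^+ 2 - k); ring.
rewrite subr_eq => /eqP ->; apply/dvdzP; exists (2 * k ^+ 2 + k); ring.
Qed.

End SquareSums.

Section PairCounting.
Variable V : finType.

Lemma card_pairs_in (A : {set V}) :
  #|[set e in pairs V | e \subset A]| = 'C(#|A|, 2).
Proof.
rewrite -cards_draws; apply: eq_card => e; by rewrite !inE andbC.
Qed.

(* The pairs of A through a point x of A are the pairs of A minus those of
   A \ {x}: there are #A - 1 of them. *)
Lemma card_pairs_through (A : {set V}) (x : V) : x \in A ->
  #|[set e in pairs V | (e \subset A) && (x \in e)]| = (#|A| - 1)%N.
Proof.
move=> xA.
have -> : [set e in pairs V | (e \subset A) && (x \in e)] =
    [set e in pairs V | e \subset A] :\: [set e in pairs V | e \subset A :\ x].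
  apply/setP => e; rewrite !inE subsetD1.
  by case: (#|e| == 2%N); case: (e \subset A); case: (x \in e).
rewrite cardsDS; last by apply/subsetP => e; rewrite !inE subsetD1 => /andP[-> /andP[-> _]].
by rewrite !card_pairs_in (cardsD1 x A) xA add1n subn1 /= binS bin1 addKn.
Qed.

Lemma handshake (D : {set {set V}}) : D \subset pairs V ->
  (\sum_(x : V) #|[set e in D | x \in e]| = 2 * #|D|)%N.
Proof.
move=> /subsetP DP.
under eq_bigr => x _ do rewrite -sum1_card big_mkcond /=.
rewrite exchange_big mulnC -sum_nat_const [RHS]big_mkcond /=.
apply: eq_bigr => e _; case: ifPn => [eD|eND]; last first.
  by rewrite big1 // => x _; rewrite inE (negbTE eND).
have := DP e eD; rewrite inE => /eqP <-; rewrite -sum1_card [RHS]big_mkcond /=.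
by apply: eq_bigr => x _; rewrite !inE eD.
Qed.

Variable F : seq {set V}.

Lemma sum_lamp_double_count (P : {set {set V}}) :
  (\sum_(e in P) lamp F e = \sum_(B <- F) #|[set e in P | e \subset B]|)%N.
Proof.
under eq_bigr => e _ do rewrite /lamp -sum1_count big_mkcond /=.
rewrite exchange_big /=; apply: eq_bigr => B _.
rewrite -sum1_card big_mkcond [RHS]big_mkcond /=.
by apply: eq_bigr => e _; rewrite inE; case: (e \in P); case: (e \subset B).
Qed.

Hypothesis triples : all (fun B : {set V} => #|B| == 3%N) F.

(* Each block covers 3 pairs, so the multiplicities sum to 3b. *)
Lemma sum_lamp_pairs : (\sum_(e in pairs V) lamp F e = 3 * size F)%N.
Proof.
rewrite sum_lamp_double_count (eq_big_seq (fun _ => 3%N)) => [|B BF].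
  by rewrite big_const_seq count_predT iter_addn_0 mulnC.
by rewrite card_pairs_in (eqP (allP triples B BF)).
Qed.

(* A block through x covers exactly 2 pairs through x, so the multiplicities
   of the pairs through x sum to an even number. *)
Lemma sum_lamp_through_even (x : V) :
  (2 %| \sum_(e in [set e in pairs V | x \in e]) lamp F e)%N.
Proof.
rewrite sum_lamp_double_count big_seq; apply: dvdn_sum => B BF.
have [xB|xNB] := boolP (x \in B).
  have -> : [set e in [set e in pairs V | x \in e] | e \subset B] =
      [set e in pairs V | (e \subset B) && (x \in e)].
    by apply/setP => e; rewrite !inE -andbA [(x \in e) && _]andbC.
  by rewrite card_pairs_through // (eqP (allP triples B BF)).
suff -> : [set e in [set e in pairs V | x \in e] | e \subset B] = set0 by rewrite cards0.
apply/setP => e; rewrite !inE; apply/negP => /andP[/andP[_ xe] /subsetP eB].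
by rewrite eB in xNB.
Qed.

End PairCounting.

Lemma odd_times_odd (n : nat) (l k : int) : ~~ odd n -> (0 < n)%N ->
  (2 %| l - 1)%Z -> (n - 1)%N%:Z * l <> 2 * k.
Proof.
move=> n_even n_gt0 /dvdzP[m l_def].
have /dvdnP[h n_def] : (2 %| n)%N by rewrite dvdn2.
have -> : l = 2 * m + 1 by rewrite -[l](subrK 1) l_def; ring.
rewrite n_def; nia.
Qed.

Section DefectGraph.
Variables (V : finType) (F : seq {set V}) (lam : int).

Lemma sumsq_expand :
  sumsq F = #|pairs V|%:Z * lam ^+ 2 + 2 * lam * \sum_(e in pairs V) dlab F lam e
            + \sum_(e in pairs V) dlab F lam e ^+ 2.
Proof.
rewrite /sumsq -natz mulr_natl -sumr_const mulr_sumr -!big_split /=.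
by apply: eq_bigr => e _; rewrite /dlab; ring.
Qed.

(* The defect graph has no isolated point: otherwise the pairs through x
   would have multiplicities summing to (v - 1) lambda, which is odd by (C2)
   but even by sum_lamp_through_even. *)
Lemma ddeg_pos (x : V) :
  all (fun B : {set V} => #|B| == 3%N) F -> ~~ odd #|V| -> (2 %| lam - 1)%Z ->
  (0 < ddeg F lam x)%N.
Proof.
move=> triples V_even lam_odd; rewrite lt0n; apply/negP => /eqP/cards0_eq no_defect.
have flat e : e \in [set e in pairs V | x \in e] -> (lamp F e)%:Z = lam.
  rewrite inE => /andP[ep xe]; apply/eqP; rewrite -subr_eq0; apply/negPn/negP => ne.
  have : e \in [set e in dedges_all F lam | x \in e] by rewrite inE xe andbT inE ep.
  by rewrite no_defect inE.
have through : #|[set e in pairs V | x \in e]| = (#|V| - 1)%N.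
  rewrite -cardsT -(card_pairs_through (in_setT x)).
  by apply: eq_card => e; rewrite !inE subsetT.
have /dvdnP[k sum_k] := sum_lamp_through_even triples x.
apply: (@odd_times_odd #|V| lam k%:Z V_even _ lam_odd); first by apply/card_gt0P; exists x.
rewrite -through -natz mulr_natl -sumr_const -(eq_bigr _ flat) -int_sum_nat sum_k.
by rewrite mulnC PoszM.
Qed.

Lemma sum_ddeg : (\sum_(x : V) ddeg F lam x = 2 * #|dedges_all F lam|)%N.
Proof.
by apply: handshake; apply/subsetP => e; rewrite inE => /andP[].
Qed.

(* A star K_{1,3} plus a perfect matching of the other points has degree
   sum 3 + (v - 1) = v + 2. *)
Lemma ddeg_star_sum sp sm cp cm :
  defect_is_star_matching F lam sp sm cp cm ->
  (\sum_(x : V) ddeg F lam x = #|V| + 2)%N.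
Proof.
case=> c [deg_c deg_other _ _ _].
rewrite (bigD1 c) //= deg_c (eq_bigr (fun _ => 1%N)) => [|x /deg_other //].
have : (0 < #|V|)%N by apply/card_gt0P; exists c.
by rewrite sum1_card cardC1; case: #|V| => // n _; rewrite add3n addn2.
Qed.

End DefectGraph.

Section AssociatedPair.
Variables (V : finType) (F : seq {set V}) (v b : nat) (lam eps : int).
Hypotheses (TS : is_TS v b F) (assoc : assoc_pair v b lam eps).

Lemma sum_dlab_assoc : \sum_(e in pairs V) dlab F lam e = eps.
Proof.
have [card_V _ size_F triples] := TS; have [count_eq _ _] := assoc.
rewrite /dlab sumrB -int_sum_nat sum_lamp_pairs // size_F count_eq.
rewrite sumr_const /pairs card_draws card_V -mulr_natl natz.
by rewrite addrAC mulrC subrr add0r.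
Qed.

Lemma sumsq_assoc :
  sumsq F = ('C(v, 2))%:Z * lam ^+ 2 + 2 * eps * lam
            + \sum_(e in pairs V) dlab F lam e ^+ 2.
Proof.
have [card_V _ _ _] := TS.
rewrite (sumsq_expand F lam) sum_dlab_assoc /pairs card_draws card_V.
by congr (_ + _ + _); ring.
Qed.

End AssociatedPair.

(* mu is the least integer >= v/2 congruent to eps mod 2. *)
Lemma mu_le (v N : nat) (S eps : int) : ~~ odd v -> (v <= 2 * N)%N ->
  N%:Z <= S -> (2 %| S - eps)%Z -> mu v eps <= S.
Proof. by rewrite /mu /eps_cong; case: ifP => /=; lia. Qed.

Lemma defect_sqr_lower (V : finType) (F : seq {set V}) v b lam eps :
  is_TS v b F -> C2 v b lam -> assoc_pair v b lam eps ->
  mu v eps <= \sum_(e in pairs V) dlab F lam e ^+ 2.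
Proof.
move=> TS [v_even lam_odd _ _] assoc.
have [card_V _ _ triples] := TS.
apply: (@mu_le v #|dedges_all F lam|) => //.
- rewrite -card_V -sum_ddeg -sum1_card; apply: leq_sum => x _.
  by apply: ddeg_pos; rewrite // card_V.
- exact: card_support_le_sum_sqr.
- by rewrite -(sum_dlab_assoc TS assoc); exact: sum_sqr_parity.
Qed.

Lemma defect_sqr_extremal (V : finType) (F : seq {set V}) v b lam eps :
  is_TS v b F -> near_balanced F lam ->
  (if eps_cong v eps then defect_is_H0 F lam v eps
   else [\/ defect_is_H1 F lam v eps, defect_is_H2 F lam v eps,
            defect_is_H3 F lam v eps | defect_is_H4 F lam v eps]) ->
  \sum_(e in pairs V) dlab F lam e ^+ 2 = mu v eps.
Proof.
move=> [card_V _ _ _] balanced shape.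
rewrite sum_sqr_unit_values // -/(dedges_all F lam).
have := sum_ddeg F lam; rewrite /mu; case: ifP shape => _.
  case=> [deg1 _ _]; rewrite (eq_bigr (fun _ => 1%N)) // sum1_card card_V; lia.
by case=> star; rewrite (ddeg_star_sum star) card_V; lia.
Qed.

Theorem lemma2p2 (v b : nat) (lam eps : int) :
  C2 v b lam -> assoc_pair v b lam eps ->
  (forall (V : finType) (F : seq {set V}), is_TS v b F ->
     sumsq F >= ('C(v, 2))%:Z * lam ^+ 2 + 2 * eps * lam + mu v eps) /\
  (forall (V : finType) (F : seq {set V}), is_TS v b F ->
     near_balanced F lam ->
     (if eps_cong v eps then defect_is_H0 F lam v eps
      else [\/ defect_is_H1 F lam v eps, defect_is_H2 F lam v eps,
               defect_is_H3 F lam v eps | defect_is_H4 F lam v eps]) ->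
     sumsq F = ('C(v, 2))%:Z * lam ^+ 2 + 2 * eps * lam + mu v eps).
Proof.
move=> C2vb assoc; split=> [V F TS | V F TS balanced shape];
  rewrite (sumsq_assoc TS assoc).
  by rewrite lerD2l; exact: defect_sqr_lower TS C2vb assoc.
by rewrite (defect_sqr_extremal TS balanced shape).
Qed.
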